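(* Let $(C_1,\sigma_1)$ and $(C_2,\sigma_2)$ be signed cycles and $(P,\pi)=(C_1,\sigma_1)\,\square\,(C_2,\sigma_2)$. Then $\chi_s(P,\pi)$ depends only on the types of the two cycles and is symmetric in them, given as follows: $BC_{even}\square BC_{even}$: $2$; $BC_{even}\square BC_{odd}$: $3$; $BC_{even}\square UC_{even}$: $4$; $BC_{even}\square UC_{odd}$: $3$; $BC_{odd}\square BC_{odd}$: $3$; $BC_{odd}\square UC_{even}$: $5$; $BC_{odd}\square UC_{odd}$: $5$; $UC_{even}\square UC_{even}$: $4$; $UC_{even}\square UC_{odd}$: $5$; $UC_{odd}\square UC_{odd}$: $3$.
   Context: A signed graph $(G,\sigma)$ is a simple loopless undirected graph with a signature $\sigma:E(G)\to\{+1,-1\}$. Switching a vertex negates the signs of its incident edges; two signatures are equivalent if one is obtained from the other by switching a set of vertices. A homomorphism of $(G,\sigma)$ to $(H,\pi)$ is a graph homomorphism $\varphi:G\to H$ for which there is a signature $\sigma'$ equivalent to $\sigma$ with $\pi(\varphi(u)\varphi(v))=\sigma'(uv)$ for every edge $uv$; $\chi_s(G,\sigma)$ is the smallest order of a signed graph to which $(G,\sigma)$ admits a homomorphism. A signed cycle (cycle of length at least $3$) is balanced if it has an even number of negative edges, unbalanced otherwise; $BC_{even}$, $BC_{odd}$, $UC_{even}$, $UC_{odd}$ denote balanced cycles of even length, balanced of odd length, unbalanced of even length, unbalanced of odd length. The Cartesian product $(G,\sigma)\,\square\,(H,\pi)$ is the signed graph on $G\,\square\,H$ where $(u,v_1)(u,v_2)$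 has sign $\pi(v_1v_2)$ and $(u_1,v)(u_2,v)$ has sign $\sigma(u_1u_2)$. *)

(* Signs are booleans: true = negative edge (-1), false = positive (+1);
   product of signs is xor (+). *)
From mathcomp Require Import all_boot.
Set Implicit Arguments. Unset Strict Implicit. Unset Printing Implicit Defensive.

(* A signed graph on a finite vertex type V: a simple loopless undirected graph
   (symmetric irreflexive adjacency) with a signature on its edges
   (given as a function on vertex pairs, symmetric on edges; only edge values matter). *)
Definition signed_graph (V : finType) (adj : rel V) (sg : V -> V -> bool) : Prop :=
  irreflexive adj /\ symmetric adj /\ (forall u v, adj u v -> sg u v = sg v u).

Definition is_shom (V W : finType) (adjG : rel V) (sG : V -> V -> bool)
  (adjH : rel W) (sH : W -> W -> bool) (phi : V -> W) : Prop :=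
  exists X : {set V}, forall u v, adjG u v ->
    adjH (phi u) (phi v) /\ sH (phi u) (phi v) = sG u v (+) (u \in X) (+) (v \in X).

Definition maps_to_order (V : finType) (adj : rel V) (sg : V -> V -> bool) (k : nat) : Prop :=
  exists (adjH : rel 'I_k) (sH : 'I_k -> 'I_k -> bool),
    signed_graph adjH sH /\ exists phi : V -> 'I_k, is_shom adj sg adjH sH phi.

Definition chis_eq (V : finType) (adj : rel V) (sg : V -> V -> bool) (k : nat) : Prop :=
  maps_to_order adj sg k /\ forall k', k' < k -> ~ maps_to_order adj sg k'.

(* The cycle C_n on 'I_n (meaningful for n >= 3): i ~ i+1 mod n. *)
Definition cyc_adj (n : nat) : rel 'I_n :=
  fun i j => (val j == i.+1 %% n) || (val i == j.+1 %% n).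

Definition neg_edges (n : nat) (sg : 'I_n -> 'I_n -> bool) : nat :=
  #|[set p : 'I_n * 'I_n | (val p.2 == p.1.+1 %% n) && sg p.1 p.2]|.

Inductive ctype := BCeven | BCodd | UCeven | UCodd.

Definition cycle_type (n : nat) (sg : 'I_n -> 'I_n -> bool) : ctype :=
  match ~~ odd (neg_edges sg), odd n with
  | true, false => BCeven
  | true, true => BCodd
  | false, false => UCeven
  | false, true => UCodd
  end.

Definition cprod_adj (U V : finType) (a1 : rel U) (a2 : rel V) : rel (U * V) :=
  fun x y => ((x.1 == y.1) && a2 x.2 y.2) || ((x.2 == y.2) && a1 x.1 y.1).

Definition cprod_sg (U V : finType) (s1 : U -> U -> bool) (s2 : V -> V -> bool)
  : U * V -> U * V -> bool :=
  fun x y => if x.1 == y.1 then s2 x.2 y.2 else s1 x.1 y.1.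

Definition chis_table (t1 t2 : ctype) : nat :=
  match t1, t2 with
  | BCeven, BCeven => 2
  | BCeven, BCodd | BCodd, BCeven => 3
  | BCeven, UCeven | UCeven, BCeven => 4
  | BCeven, UCodd | UCodd, BCeven => 3
  | BCodd, BCodd => 3
  | BCodd, UCeven | UCeven, BCodd => 5
  | BCodd, UCodd | UCodd, BCodd => 5
  | UCeven, UCeven => 4
  | UCeven, UCodd | UCodd, UCeven => 5
  | UCodd, UCodd => 3
  end.

(* A signed cycle is switching equivalent to one whose only possible negative edge is the last
   one, so it folds onto a small core: an edge if it is balanced of even length, a triangle
   (with one negative edge if unbalanced) if its length is odd, and a 4-cycle with one negative
   edge if it is unbalanced of even length. The product of two cores maps to a signed complete
   graph of the claimed order; these maps are listed explicitly and checked by computation.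

   The lower bounds use that switching preserves the sign of closed walks. An odd cycle rules
   out order 2. Every signature on three vertices is switching equivalent to a constant one,
   under which closed walks of even length are balanced, so an unbalanced even cycle rules out
   order 3. Every signature on four vertices is switching equivalent to one whose negative
   edges form a clique. Pulling such a clique back to C_n x C_m, each (balanced) square
   contains as many horizontal as vertical clique edges, while the horizontal ones have parity
   sign(C_n) * m and the vertical ones sign(C_m) * n; this rules out order 4 in the three
   remaining cases. *)

From mathcomp Require Import all_boot zify.
Set Implicit Arguments. Unset Strict Implicit. Unset Printing Implicit Defensive.

Lemma ordS_val_cases n (i : 'I_n) :
  (i.+1 < n /\ (ordS i : nat) = i.+1) \/ (i.+1 = n /\ (ordS i : nat) = 0).
Proof.
case: (ltnP i.+1 n) => h; first by left; rewrite /= modn_small.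
have e : i.+1 = n by apply/eqP; rewrite eqn_leq h ltn_ord.
by right; rewrite /= e modnn.
Qed.

Lemma ordS_neq n (i : 'I_n) : 1 < n -> (ordS i == i) = false.
Proof.
move=> n_gt1; apply/negbTE; rewrite -val_eqE /=.
by case: (ordS_val_cases i) => -[? /= ->]; lia.
Qed.

Lemma cyc_adjE n (i j : 'I_n) : cyc_adj i j = (j == ordS i) || (i == ordS j).
Proof. by []. Qed.

Lemma cyc_adjS n (i : 'I_n) : cyc_adj i (ordS i).
Proof. by rewrite cyc_adjE eqxx. Qed.

Lemma cyc_adj_irr n : 1 < n -> irreflexive (@cyc_adj n).
Proof. by move=> n_gt1 i; rewrite cyc_adjE eq_sym ordS_neq. Qed.

Lemma cyc_adj_sym n : symmetric (@cyc_adj n).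
Proof. by move=> i j; rewrite !cyc_adjE orbC. Qed.

Lemma xorb_const n (b : bool) : \big[addb/false]_(i < n) b = b && odd n.
Proof.
rewrite big_const_ord; elim: n => [|n IHn] /=; first by rewrite andbF.
by rewrite IHn; case: b {IHn}.
Qed.

Lemma odd_sum I (r : seq I) (P : pred I) (F : I -> nat) :
  odd (\sum_(i <- r | P i) F i) = \big[addb/false]_(i <- r | P i) odd (F i).
Proof. exact: (big_morph odd oddD). Qed.

Lemma xorb_coboundary n (F g : 'I_n -> bool) :
  \big[addb/false]_(i < n) (F i (+) (g i (+) g (ordS i))) = \big[addb/false]_(i < n) F i.
Proof.
rewrite !big_split /= [X in _ (+) (X (+) _)](reindex_inj (@ordS_inj n)) /=.
by rewrite addbb addbF.
Qed.

Definition cycle_sign n (s : 'I_n -> 'I_n -> bool) : bool :=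
  \big[addb/false]_(i < n) s i (ordS i).

Lemma odd_neg_edges n (s : 'I_n -> 'I_n -> bool) : odd (neg_edges s) = cycle_sign s.
Proof.
rewrite /neg_edges -sum1_card big_mkcond /=.
set A := [set p | _].
have -> : \sum_(p : 'I_n * 'I_n) (if p \in A then 1 else 0) =
          \sum_(i < n) \sum_(j < n) (if (i, j) \in A then 1 else 0).
  by rewrite pair_big; apply: eq_bigr => -[].
rewrite odd_sum; apply: eq_bigr => i _.
rewrite (bigD1 (ordS i)) //= inE eqxx big1 /= => [|j ne_j]; first by case: (s _ _).
by rewrite inE /=; case: eqP => // eq_j; case/eqP: ne_j; apply: val_inj.
Qed.

Definition neg_in (negs : seq (nat * nat)) (x y : nat) : bool :=
  ((x, y) \in negs) || ((y, x) \in negs).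

Definition sg_of k (negs : seq (nat * nat)) (x y : 'I_k) : bool := neg_in negs x y.

Lemma sg_ofC k negs (x y : 'I_k) : sg_of negs x y = sg_of negs y x.
Proof. by rewrite /sg_of /neg_in orbC. Qed.

Definition complete k : rel 'I_k := fun x y => x != y.

Lemma signed_graph_complete k negs : signed_graph (@complete k) (sg_of negs).
Proof.
split; first by move=> x; rewrite /complete eqxx.
by split=> [x y|x y _]; [rewrite /complete eq_sym | apply: sg_ofC].
Qed.

Lemma shom_comp (U V W : finType) (aU : rel U) sU (aV : rel V) sV (aW : rel W) sW
    (f : U -> V) (g : V -> W) :
  is_shom aU sU aV sV f -> is_shom aV sV aW sW g -> is_shom aU sU aW sW (g \o f).
Proof.
move=> [X fX] [Y gY]; exists [set u | (u \in X) (+) (f u \in Y)] => u v uv.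
have [fuv fs] := fX _ _ uv; have [gfuv gs] := gY _ _ fuv; split=> //=.
rewrite gs fs !inE.
by case: (sU u v); case: (u \in X); case: (v \in X); case: (f u \in Y); case: (f v \in Y).
Qed.

Lemma maps_to_order_shom (U V : finType) (aU : rel U) sU (aV : rel V) sV k (f : U -> V) :
  is_shom aU sU aV sV f -> maps_to_order aV sV k -> maps_to_order aU sU k.
Proof.
move=> hf [aH [sH [sgH [phi hphi]]]].
by exists aH, sH; split=> //; exists (phi \o f); apply: shom_comp hf hphi.
Qed.

Lemma closed_walk_sign (U V : finType) (aU : rel U) sU (aV : rel V) sV
    L (w : 'I_L -> U) (phi : U -> V) :
  is_shom aU sU aV sV phi -> (forall i, aU (w i) (w (ordS i))) ->
  \big[addb/false]_(i < L) sV (phi (w i)) (phi (w (ordS i))) =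
  \big[addb/false]_(i < L) sU (w i) (w (ordS i)).
Proof.
move=> [X hX] hw; rewrite -[RHS](xorb_coboundary _ (fun i => w i \in X)).
by apply: eq_bigr => i _; rewrite (proj2 (hX _ _ (hw i))) addbA.
Qed.

Lemma maps_to_order_mono (V : finType) (adj : rel V) sg k k' :
  k <= k' -> maps_to_order adj sg k -> maps_to_order adj sg k'.
Proof.
move=> le_kk' [aH [sH [[irr [sym ssym]] [phi [X hX]]]]].
pose restr T (r : 'I_k -> 'I_k -> T) (dflt : T) (x y : 'I_k') :=
  if insub (val x) is Some x0 then if insub (val y) is Some y0 then r x0 y0 else dflt else dflt.
exists (restr _ aH false), (restr _ sH false); split.
  split=> [x|]; first by rewrite /restr; case: insub => // x0; rewrite irr.
  split=> x y; rewrite /restr; case: insub => [x0|] //; case: insub => [y0|] //.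
  exact: ssym.
exists (widen_ord le_kk' \o phi), X => u v uv.
have widenK x : insub (val (widen_ord le_kk' x)) = Some x by rewrite /= valK.
by rewrite /restr /= !widenK; apply: hX.
Qed.

Lemma shom_cprod (U1 U2 W1 W2 : finType) (a1 : rel U1) s1 (a2 : rel U2) s2
    (b1 : rel W1) t1 (b2 : rel W2) t2 (f1 : U1 -> W1) (f2 : U2 -> W2) :
  irreflexive a1 -> irreflexive b1 -> is_shom a1 s1 b1 t1 f1 -> is_shom a2 s2 b2 t2 f2 ->
  is_shom (cprod_adj a1 a2) (cprod_sg s1 s2) (cprod_adj b1 b2) (cprod_sg t1 t2)
    (fun u => (f1 u.1, f2 u.2)).
Proof.
move=> irr_a1 irr_b1 [X1 h1] [X2 h2].
exists [set u | (u.1 \in X1) (+) (u.2 \in X2)] => u v.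
rewrite /cprod_adj /cprod_sg !inE /= => /orP [/andP [/eqP e uv] | /andP [/eqP e uv]].
- have [fuv fs] := h2 _ _ uv; rewrite e !eqxx fuv fs; split=> //.
  by case: (s2 u.2 v.2); case: (u.2 \in X2); case: (v.2 \in X2); case: (v.1 \in X1).
- have [fuv fs] := h1 _ _ uv.
  have -> : (f1 u.1 == f1 v.1) = false by apply: contraTF fuv => /eqP ->; rewrite irr_b1.
  have -> : (u.1 == v.1) = false by apply: contraTF uv => /eqP ->; rewrite irr_a1.
  rewrite e !eqxx fuv fs orbT; split=> //.
  by case: (s1 u.1 v.1); case: (u.1 \in X1); case: (v.1 \in X1); case: (v.2 \in X2).
Qed.

Definition prefix_sign n (s : 'I_n -> 'I_n -> bool) (i : 'I_n) : bool :=
  \big[addb/false]_(k < n | k < i) s k (ordS k).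

Lemma prefix_signS n (s : 'I_n -> 'I_n -> bool) (i : 'I_n) :
  s i (ordS i) =
  prefix_sign s i (+) prefix_sign s (ordS i) (+) (cycle_sign s && (i == n.-1 :> nat)).
Proof.
have split_i (P : pred 'I_n) : P i -> (forall k, P k && (k != i) = (k < i)) ->
    \big[addb/false]_(k < n | P k) s k (ordS k) = s i (ordS i) (+) prefix_sign s i.
  by move=> Pi PE; rewrite (bigD1 i) //; congr (_ (+) _); apply: eq_bigl.
case: (ordS_val_cases i) => -[lt_in eS].
- rewrite /prefix_sign eS [X in _ (+) X (+) _](split_i (fun k => k < i.+1)) /=; first last.
  + by move=> k; rewrite -val_eqE /=; lia.
  + exact: ltnSn.
  have -> : (i == n.-1 :> nat) = false by apply/eqP; lia.
  by rewrite andbF addbF addbA addbC addbA addbb.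
- rewrite /prefix_sign eS [X in _ (+) X (+) _]big_pred0 // addbF.
  have -> : (i == n.-1 :> nat) = true by apply/eqP; lia.
  rewrite andbT /cycle_sign (split_i predT) // => [|k].
    by rewrite /prefix_sign addbA addbC addbA addbb.
  by rewrite -val_eqE /=; have := ltn_ord k; lia.
Qed.

Definition cycle_fold n k (aT : rel 'I_k) (sT : 'I_k -> 'I_k -> bool) (b : bool)
    (psi : 'I_n -> 'I_k) : Prop :=
  forall i : 'I_n,
    aT (psi i) (psi (ordS i)) && (sT (psi i) (psi (ordS i)) == b && (i == n.-1 :> nat)).

Lemma cycle_fold_shom n k (s : 'I_n -> 'I_n -> bool) (aT : rel 'I_k)
    (sT : 'I_k -> 'I_k -> bool) (psi : 'I_n -> 'I_k) :
  signed_graph (@cyc_adj n) s -> symmetric aT -> (forall x y, sT x y = sT y x) ->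
  cycle_fold aT sT (cycle_sign s) psi -> is_shom (@cyc_adj n) s aT sT psi.
Proof.
move=> [_ [_ sC]] aTC sTC hpsi; exists [set i | prefix_sign s i] => u v.
have edge i : aT (psi i) (psi (ordS i)) /\
    sT (psi i) (psi (ordS i)) = s i (ordS i) (+) (i \in [set i | prefix_sign s i])
                                           (+) (ordS i \in [set i | prefix_sign s i]).
  case/andP: (hpsi i) => -> /eqP ->; split=> //; rewrite !inE (prefix_signS s i).
  by case: (prefix_sign s i); case: (prefix_sign s (ordS i)); case: (_ && _).
rewrite cyc_adjE => /orP [/eqP -> | /eqP ->]; first exact: edge.
rewrite aTC sTC -sC ?cyc_adjS //; have [-> ->] := edge v; split=> //.
by rewrite addbAC.
Qed.

Definition fold2 n (i : 'I_n) : 'I_2 := inord (odd i).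
Definition fold3 n (i : 'I_n) : 'I_3 := inord (if i == n.-1 :> nat then 2 else odd i).
Definition fold4 n (i : 'I_n) : 'I_4 := inord (if i < 4 then i : nat else 2 + odd i).

Lemma fold2_cycle_fold n : ~~ odd n -> cycle_fold (@cyc_adj 2) (sg_of [::]) false (@fold2 n).
Proof.
move=> even_n i; have odd_S : odd (ordS i) = ~~ odd i.
  case: (ordS_val_cases i) => -[lt_in ->] //=.
  by move: even_n; rewrite -(congr1 odd lt_in) /= negbK => ->.
by rewrite /fold2 /cyc_adj /sg_of /neg_in odd_S /= !inordK; case: (odd i).
Qed.

Lemma fold3_cycle_fold n (b : bool) : odd n -> 3 <= n ->
  cycle_fold (@cyc_adj 3) (sg_of (if b then [:: (0, 2)] else [::])) b (@fold3 n).
Proof.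
move=> odd_n n_ge3 i; rewrite /fold3 /cyc_adj /sg_of /neg_in.
case: (ordS_val_cases i) => -[lt_in ->]; last first.
  have -> : (i == n.-1 :> nat) = true by apply/eqP; lia.
  have -> : (0 == n.-1) = false by apply/negbTE; lia.
  by rewrite /= !inordK //; case: b.
have -> : (i == n.-1 :> nat) = false by apply/negbTE; lia.
case: (ltngtP i.+2 n) => [lt_i2n | ? | eq_i2n]; first 2 last; try lia.
  have -> : (i.+1 == n.-1 :> nat) = true by apply/eqP; lia.
  have odd_i : odd i by move: odd_n; rewrite -(congr1 odd eq_i2n) /= negbK.
  by rewrite odd_i /= !inordK //; case: b.
have -> : (i.+1 == n.-1 :> nat) = false by apply/negbTE; lia.
by rewrite /= !inordK /=; case: (odd i); case: b.
Qed.

Lemma fold4_cycle_fold n : ~~ odd n -> 3 <= n ->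
  cycle_fold (@cyc_adj 4) (sg_of [:: (0, 3)]) true (@fold4 n).
Proof.
move=> even_n n_ge3 i; rewrite /fold4 /cyc_adj /sg_of /neg_in.
have n_ge4 : 4 <= n by case: (ltngtP n 3) => // e; [lia | by rewrite e in even_n].
case: (ordS_val_cases i) => -[lt_in ->] /=; last first.
  have -> : (i == n.-1 :> nat) = true by apply/eqP; lia.
  have odd_i : odd i by move: even_n; rewrite -(congr1 odd lt_in) /= negbK.
  case: (ltnP i 4) => [lt_i4 | ge_i4]; last by rewrite odd_i /= !inordK.
  have -> : (i : nat) = 3 by lia.
  by rewrite !inordK.
have -> : (i == n.-1 :> nat) = false by apply/negbTE; lia.
case: (ltngtP i 3) => [lt_i3 | gt_i3 | ->]; last by rewrite /= !inordK.
- have lt_i4 : i < 4 by lia.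
  rewrite lt_i4 ltnS lt_i3 !inordK //; try lia.
  by case: (nat_of_ord i) lt_i3 => [|[|[|]]].
- have -> : (i < 4) = false by apply/negbTE; lia.
  have -> : (i.+1 < 4) = false by apply/negbTE; lia.
  by rewrite /= !inordK; case: (odd i).
Qed.

Definition core_len (t : ctype) : nat :=
  match t with BCeven => 2 | BCodd | UCodd => 3 | UCeven => 4 end.

Definition core_negs (t : ctype) : seq (nat * nat) :=
  match t with BCeven | BCodd => [::] | UCeven => [:: (0, 3)] | UCodd => [:: (0, 2)] end.

Lemma cycle_to_core n (s : 'I_n -> 'I_n -> bool) : 3 <= n -> signed_graph (@cyc_adj n) s ->
  exists psi : 'I_n -> 'I_(core_len (cycle_type s)),
    is_shom (@cyc_adj n) s (@cyc_adj _) (sg_of (core_negs (cycle_type s))) psi.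
Proof.
move=> n_ge3 sg_s; rewrite /cycle_type odd_neg_edges.
have fold_shom k negs (psi : 'I_n -> 'I_k) :
    cycle_fold (@cyc_adj k) (sg_of negs) (cycle_sign s) psi ->
    is_shom (@cyc_adj n) s (@cyc_adj k) (sg_of negs) psi.
  by apply: cycle_fold_shom => //; [apply: cyc_adj_sym | apply: sg_ofC].
case sign_s : (cycle_sign s); case odd_n : (odd n) => /=; eexists; apply: fold_shom; rewrite sign_s.
- exact: (@fold3_cycle_fold _ true).
- by apply: fold4_cycle_fold; rewrite ?odd_n.
- exact: (@fold3_cycle_fold _ false).
- by apply: fold2_cycle_fold; rewrite odd_n.
Qed.

Definition all_below n (P : pred nat) : bool := all P (iota 0 n).

Lemma all_belowP n (P : pred nat) i : all_below n P -> i < n -> P i.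
Proof. by move=> /allP hP lt_in; apply: hP; rewrite mem_iota. Qed.

Definition cell (col : seq (seq nat)) (i j : nat) : nat := nth 0 (nth [::] col i) j.

(* [cyc_adj i j] on ['I_n] is convertible to [cyc_adjn n i j] on the values. *)
Definition cyc_adjn n (i j : nat) : bool := (j == i.+1 %% n) || (i == j.+1 %% n).

(* A map from C_a x C_b: the colour of cell (i, j) is entry j of row i of the first component,
   the second lists the switched cells, the third the negative edges of the target K_k. *)
Definition product_map : Type := seq (seq nat) * seq (nat * nat) * seq (nat * nat).

Definition valid_map (a b k : nat) (neg1 neg2 : seq (nat * nat)) (m : product_map) : bool :=
  let: (col, sw, negs) := m in
  all_below a (fun i => all_below b (fun j => (cell col i j < k) &&
    all_below a (fun i' => all_below b (fun j' =>
      ((i == i') && cyc_adjn b j j') || ((j == j') && cyc_adjn a i i') ==>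
      (cell col i j != cell col i' j') &&
      (neg_in negs (cell col i j) (cell col i' j') ==
         (if i == i' then neg_in neg2 j j' else neg_in neg1 i i')
         (+) ((i, j) \in sw) (+) ((i', j') \in sw)))))).

Lemma valid_map_maps a b k neg1 neg2 (m : product_map) :
  valid_map a b k.+1 neg1 neg2 m ->
  maps_to_order (cprod_adj (@cyc_adj a) (@cyc_adj b)) (cprod_sg (sg_of neg1) (sg_of neg2)) k.+1.
Proof.
case: m => [[col sw] negs] valid.
exists (@complete k.+1), (sg_of negs); split; first exact: signed_graph_complete.
exists (fun u : 'I_a * 'I_b => inord (cell col u.1 u.2)), [set u | (val u.1, val u.2) \in sw].
move=> [[i lt_ia] [j lt_jb]] [[i' lt_i'a] [j' lt_j'b]] adj.
have /andP [lt_k /all_belowP /(_ lt_i'a) /all_belowP /(_ lt_j'b)] :=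
  all_belowP (all_belowP valid lt_ia) lt_jb.
have /andP [lt_k' _] := all_belowP (all_belowP valid lt_i'a) lt_j'b.
have adjn : ((i == i') && cyc_adjn b j j') || ((j == j') && cyc_adjn a i i') := adj.
rewrite adjn /= => /andP [ne_cells /eqP sign_cells].
by rewrite /complete /sg_of !inE -val_eqE /= !inordK.
Qed.

Definition core_product_map (t1 t2 : ctype) : product_map :=
  match t1, t2 with
  | BCeven, BCeven => ([:: [:: 0; 1]; [:: 1; 0]], [::], [::])
  | BCeven, BCodd => ([:: [:: 0; 1; 2]; [:: 1; 2; 0]], [::], [::])
  | BCeven, UCeven => ([:: [:: 0; 1; 2; 3]; [:: 1; 2; 3; 0]],
                       [:: (0, 3); (1, 2); (1, 3)], [:: (2, 3)])
  | BCeven, UCodd => ([:: [:: 0; 1; 2]; [:: 1; 2; 0]], [:: (0, 2); (1, 1); (1, 2)], [:: (1, 2)])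
  | BCodd, BCeven => ([:: [:: 0; 1]; [:: 1; 2]; [:: 2; 0]], [::], [::])
  | BCodd, BCodd => ([:: [:: 0; 1; 2]; [:: 1; 2; 0]; [:: 2; 0; 1]], [::], [::])
  | BCodd, UCeven => ([:: [:: 0; 1; 2; 3]; [:: 1; 2; 0; 4]; [:: 2; 0; 4; 1]],
                      [:: (0, 3); (2, 3)], [:: (1, 4); (2, 3); (3, 4)])
  | BCodd, UCodd => ([:: [:: 0; 1; 4]; [:: 1; 3; 2]; [:: 2; 0; 3]],
                     [:: (0, 2); (1, 2)], [:: (1, 4); (2, 3); (3, 4)])
  | UCeven, BCeven => ([:: [:: 0; 1]; [:: 1; 2]; [:: 2; 3]; [:: 3; 0]],
                       [:: (2, 1); (3, 0); (3, 1)], [:: (2, 3)])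
  | UCeven, BCodd => ([:: [:: 0; 1; 2]; [:: 1; 2; 0]; [:: 2; 0; 4]; [:: 3; 4; 1]],
                      [:: (3, 0); (3, 2)], [:: (1, 4); (2, 3); (3, 4)])
  | UCeven, UCeven => ([:: [:: 0; 1; 2; 3]; [:: 1; 2; 3; 0]; [:: 2; 3; 0; 1]; [:: 3; 0; 1; 2]],
                       [:: (0, 3); (1, 2); (1, 3); (2, 1); (2, 2); (2, 3);
                           (3, 0); (3, 1); (3, 2); (3, 3)],
                       [:: (2, 3)])
  | UCeven, UCodd => ([:: [:: 0; 1; 4]; [:: 1; 3; 2]; [:: 2; 0; 3]; [:: 3; 4; 0]],
                      [:: (0, 2); (1, 2); (3, 0)], [:: (1, 4); (2, 3); (3, 4)])
  | UCodd, BCeven => ([:: [:: 0; 1]; [:: 1; 2]; [:: 2; 0]],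
                      [:: (1, 1); (2, 0); (2, 1)], [:: (1, 2)])
  | UCodd, BCodd => ([:: [:: 0; 1; 2]; [:: 1; 3; 0]; [:: 4; 2; 3]],
                     [:: (2, 0); (2, 1)], [:: (1, 4); (2, 3); (3, 4)])
  | UCodd, UCeven => ([:: [:: 0; 1; 2; 3]; [:: 1; 3; 0; 4]; [:: 4; 2; 3; 0]],
                      [:: (0, 3); (2, 0); (2, 1)], [:: (1, 4); (2, 3); (3, 4)])
  | UCodd, UCodd => ([:: [:: 0; 1; 2]; [:: 1; 2; 0]; [:: 2; 0; 1]],
                     [:: (0, 2); (1, 1); (1, 2); (2, 0); (2, 1); (2, 2)], [:: (1, 2)])
  end.

Lemma core_product_maps t1 t2 :
  maps_to_order (cprod_adj (@cyc_adj (core_len t1)) (@cyc_adj (core_len t2)))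
                (cprod_sg (sg_of (core_negs t1)) (sg_of (core_negs t2))) (chis_table t1 t2).
Proof.
have : valid_map (core_len t1) (core_len t2) (chis_table t1 t2) (core_negs t1) (core_negs t2)
                 (core_product_map t1 t2) by case: t1; case: t2; vm_compute.
by case: t1; case: t2; apply: valid_map_maps.
Qed.

Lemma chis_upper n m (s1 : 'I_n -> 'I_n -> bool) (s2 : 'I_m -> 'I_m -> bool) :
  3 <= n -> signed_graph (@cyc_adj n) s1 -> 3 <= m -> signed_graph (@cyc_adj m) s2 ->
  maps_to_order (cprod_adj (@cyc_adj n) (@cyc_adj m)) (cprod_sg s1 s2)
                (chis_table (cycle_type s1) (cycle_type s2)).
Proof.
move=> n_ge3 sg1 m_ge3 sg2.
have [psi1 hom1] := cycle_to_core n_ge3 sg1; have [psi2 hom2] := cycle_to_core m_ge3 sg2.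
apply: maps_to_order_shom (core_product_maps _ _).
apply: shom_cprod hom1 hom2; apply: cyc_adj_irr; first lia.
by case: (cycle_type s1).
Qed.

Lemma odd_closed_walk_no_map2 (V : finType) (adj : rel V) sg L (w : 'I_L -> V) :
  odd L -> (forall i, adj (w i) (w (ordS i))) -> ~ maps_to_order adj sg 2.
Proof.
move=> odd_L hw [aH [sH [[irr _] [phi [X hX]]]]].
pose side i := (phi (w i) : nat) == 0.
have flip i : side i (+) side (ordS i) = true.
  have [adj_i _] := hX _ _ (hw i).
  have : phi (w i) != phi (w (ordS i)) by apply: contraTneq adj_i => ->; rewrite irr.
  rewrite -val_eqE /side.
  by case: (phi (w i)) => [[|[|?]] ?] //; case: (phi (w (ordS i))) => [[|[|?]] ?].
have := xorb_coboundary (fun=> false) side.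
by rewrite (eq_bigr (fun=> true)) => [|i _]; rewrite ?xorb_const ?odd_L //= flip.
Qed.

Lemma sign3_normal_form (s : 'I_3 -> 'I_3 -> bool) :
  exists (c : bool) (y : 'I_3 -> bool), forall a b : 'I_3, a < b -> s a b = c (+) y a (+) y b.
Proof.
pose v x y := s (inord x) (inord y).
exists (v 0 1 (+) v 0 2 (+) v 1 2).
exists (fun a => if val a == 0 then false
                 else if val a == 1 then v 0 2 (+) v 1 2 else v 0 1 (+) v 1 2).
move=> a b lt_ab; rewrite -[a]inord_val -[b]inord_val.
have : [|| (a == 0 :> nat) && (b == 1 :> nat), (a == 0 :> nat) && (b == 2 :> nat)
        | (a == 1 :> nat) && (b == 2 :> nat)].
  by have := ltn_ord b; lia.
case/or3P => /andP [/eqP -> /eqP ->] /=; rewrite !inordK //= /v.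
all: by case: (s (inord 0) (inord 1)); case: (s (inord 0) (inord 2)); case: (s (inord 1) (inord 2)).
Qed.

Lemma edge_sign_from_lt k (aH : rel 'I_k) sH (F : 'I_k -> 'I_k -> bool) :
  signed_graph aH sH -> (forall a b, F a b = F b a) ->
  (forall a b : 'I_k, a < b -> sH a b = F a b) -> forall a b, aH a b -> sH a b = F a b.
Proof.
move=> [irr [_ sC]] FC hF a b ab; case: (ltngtP a b) => [lt_ab | lt_ba | eq_ab].
- exact: hF.
- by rewrite sC // FC hF.
- by move: ab; rewrite (val_inj eq_ab) irr.
Qed.

Lemma unbalanced_even_walk_no_map3 (V : finType) (adj : rel V) sg L (w : 'I_L -> V) :
  ~~ odd L -> (forall i, adj (w i) (w (ordS i))) ->
  \big[addb/false]_(i < L) sg (w i) (w (ordS i)) -> ~ maps_to_order adj sg 3.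
Proof.
move=> even_L hw unbalanced [aH [sH [sgH [phi hphi]]]].
have [c [y hy]] := sign3_normal_form sH.
have sH_edge : forall a b, aH a b -> sH a b = c (+) y a (+) y b.
  by apply: edge_sign_from_lt sgH _ hy => a b; rewrite addbAC.
move: unbalanced; rewrite -(closed_walk_sign hphi hw).
rewrite (eq_bigr (fun i => c (+) (y (phi (w i)) (+) y (phi (w (ordS i)))))) => [|i _].
  by rewrite (xorb_coboundary (fun=> c)) xorb_const (negbTE even_L) andbF.
by case: (hphi) => X /(_ _ _ (hw i)) [/sH_edge -> _]; rewrite addbA.
Qed.

Definition sig4 (v01 v02 v03 v12 v13 v23 : bool) (x y : nat) : bool :=
  match x, y with
  | 0, 1 => v01 | 0, 2 => v02 | 0, 3 => v03 | 1, 2 => v12 | 1, 3 => v13 | 2, 3 => v23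
  | _, _ => false
  end.

Definition bit (k x : nat) : bool := odd (k %/ 2 ^ x).

Definition switched_clique4 (s : nat -> nat -> bool) (ky kc : nat) : bool :=
  all_below 4 (fun x => all_below 4 (fun y =>
    (x < y) ==> (s x y == bit ky x (+) bit ky y (+) (bit kc x && bit kc y)))).

Lemma sig4_switched_clique v01 v02 v03 v12 v13 v23 :
  has (fun ky => has (switched_clique4 (sig4 v01 v02 v03 v12 v13 v23) ky) (iota 0 16)) (iota 0 16).
Proof. by case: v01; case: v02; case: v03; case: v12; case: v13; case: v23; vm_compute. Qed.

Lemma sign4_normal_form (s : 'I_4 -> 'I_4 -> bool) :
  exists y c : 'I_4 -> bool, forall a b : 'I_4, a < b -> s a b = y a (+) y b (+) (c a && c b).
Proof.
pose v x y := s (inord x) (inord y).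
have /hasP [ky _ /hasP [kc _ clique]] :=
  sig4_switched_clique (v 0 1) (v 0 2) (v 0 3) (v 1 2) (v 1 3) (v 2 3).
exists (fun a => bit ky a), (fun a => bit kc a) => a b lt_ab.
have := all_belowP (all_belowP clique (ltn_ord a)) (ltn_ord b).
rewrite lt_ab /= => /eqP <-; rewrite -[a]inord_val -[b]inord_val /v !inordK //.
move: (nat_of_ord a) (nat_of_ord b) (ltn_ord a) (ltn_ord b) lt_ab => x z lt_x4 lt_z4 lt_xz.
by case: x lt_x4 lt_xz => [|[|[|[|x]]]] // _; case: z lt_z4 => [|[|[|[|z]]]].
Qed.

Lemma cprod_adj_row n m (i : 'I_n) (j : 'I_m) :
  cprod_adj (@cyc_adj n) (@cyc_adj m) (i, j) (ordS i, j).
Proof. by rewrite /cprod_adj /= eqxx cyc_adjS orbT. Qed.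

Lemma cprod_adj_col n m (i : 'I_n) (j : 'I_m) :
  cprod_adj (@cyc_adj n) (@cyc_adj m) (i, j) (i, ordS j).
Proof. by rewrite /cprod_adj /= eqxx cyc_adjS. Qed.

Lemma cprod_sg_row n m (s1 : 'I_n -> 'I_n -> bool) (s2 : 'I_m -> 'I_m -> bool) i j :
  1 < n -> cprod_sg s1 s2 (i, j) (ordS i, j) = s1 i (ordS i).
Proof. by move=> n_gt1; rewrite /cprod_sg /= eq_sym ordS_neq. Qed.

Lemma cprod_sg_col n m (s1 : 'I_n -> 'I_n -> bool) (s2 : 'I_m -> 'I_m -> bool) i j :
  cprod_sg s1 s2 (i, j) (i, ordS j) = s2 j (ordS j).
Proof. by rewrite /cprod_sg /= eqxx. Qed.

Lemma balanced_square_count (a b c d : bool) :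
  (a && b) (+) (c && d) (+) (a && c) (+) (b && d) = false ->
  (a && b) + (c && d) = (a && c) + (b && d).
Proof. by case: a; case: b; case: c; case: d. Qed.

Section TorusParity.
Variables (n m : nat) (s1 : 'I_n -> 'I_n -> bool) (s2 : 'I_m -> 'I_m -> bool).
Variables t z : 'I_n * 'I_m -> bool.
Hypothesis n_gt1 : 1 < n.
Hypothesis clique_sign : forall u v, cprod_adj (@cyc_adj n) (@cyc_adj m) u v ->
  (t u && t v) = cprod_sg s1 s2 u v (+) z u (+) z v.

Let hor := \sum_(i < n) \sum_(j < m) (t (i, j) && t (ordS i, j)).
Let ver := \sum_(i < n) \sum_(j < m) (t (i, j) && t (i, ordS j)).

Lemma torus_square i j :
  (t (i, j) && t (ordS i, j)) + (t (i, ordS j) && t (ordS i, ordS j)) =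
  (t (i, j) && t (i, ordS j)) + (t (ordS i, j) && t (ordS i, ordS j)).
Proof.
apply: balanced_square_count.
rewrite (clique_sign (cprod_adj_row i j)) (clique_sign (cprod_adj_row i (ordS j))).
rewrite (clique_sign (cprod_adj_col i j)) (clique_sign (cprod_adj_col (ordS i) j)).
rewrite !cprod_sg_row // !cprod_sg_col.
move: (s1 i (ordS i)) (s2 j (ordS j)) (z (i, j)) (z (ordS i, j)).
by move: (z (i, ordS j)) (z (ordS i, ordS j)); do 6!case.
Qed.

Lemma hor_eq_ver : hor = ver.
Proof.
suff : hor + hor = ver + ver by lia.
have -> : hor + hor = \sum_(i < n) \sum_(j < m)
    ((t (i, j) && t (ordS i, j)) + (t (i, ordS j) && t (ordS i, ordS j))).
  rewrite -big_split /=; apply: eq_bigr => i _.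
  by rewrite big_split /=; congr (_ + _); rewrite [LHS](reindex_inj (@ordS_inj m)).
have -> : ver + ver = \sum_(i < n) \sum_(j < m)
    ((t (i, j) && t (i, ordS j)) + (t (ordS i, j) && t (ordS i, ordS j))).
  rewrite [X in _ + X](reindex_inj (@ordS_inj n)) -big_split /=.
  by apply: eq_bigr => i _; rewrite big_split.
by apply: eq_bigr => i _; apply: eq_bigr => j _; apply: torus_square.
Qed.

Lemma clique_torus_parity : cycle_sign s1 && odd m = cycle_sign s2 && odd n.
Proof.
have row_sign j : \big[addb/false]_(i < n) (t (i, j) && t (ordS i, j)) = cycle_sign s1.
  rewrite /cycle_sign -[RHS](xorb_coboundary _ (fun i => z (i, j))); apply: eq_bigr => i _.
  by rewrite clique_sign ?cprod_adj_row // cprod_sg_row // addbA.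
have col_sign i : \big[addb/false]_(j < m) (t (i, j) && t (i, ordS j)) = cycle_sign s2.
  rewrite /cycle_sign -[RHS](xorb_coboundary _ (fun j => z (i, j))); apply: eq_bigr => j _.
  by rewrite clique_sign ?cprod_adj_col // cprod_sg_col addbA.
have <- : odd hor = cycle_sign s1 && odd m.
  rewrite /hor exchange_big /= odd_sum -xorb_const; apply: eq_bigr => j _.
  by rewrite odd_sum -(row_sign j); apply: eq_bigr => i _; case: (_ && _).
have <- : odd ver = cycle_sign s2 && odd n.
  rewrite /ver odd_sum -xorb_const; apply: eq_bigr => i _.
  by rewrite odd_sum -(col_sign i); apply: eq_bigr => j _; case: (_ && _).
by rewrite hor_eq_ver.
Qed.

End TorusParity.

Lemma torus_no_map1 n m (s1 : 'I_n -> 'I_n -> bool) (s2 : 'I_m -> 'I_m -> bool) :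
  0 < n -> 0 < m -> ~ maps_to_order (cprod_adj (@cyc_adj n) (@cyc_adj m)) (cprod_sg s1 s2) 1.
Proof.
move=> n_gt0 m_gt0 [aH [sH [[irr _] [phi [X hX]]]]].
have [adj_phi _] := hX _ _ (cprod_adj_row (Ordinal n_gt0) (Ordinal m_gt0)).
by move: adj_phi; rewrite [phi (ordS _, _)]ord1 [phi (Ordinal _, _)]ord1 irr.
Qed.

Lemma torus_no_map2 n m (s1 : 'I_n -> 'I_n -> bool) (s2 : 'I_m -> 'I_m -> bool) :
  0 < n -> 0 < m -> odd n || odd m ->
  ~ maps_to_order (cprod_adj (@cyc_adj n) (@cyc_adj m)) (cprod_sg s1 s2) 2.
Proof.
move=> n_gt0 m_gt0 /orP [odd_n | odd_m].
- exact: (odd_closed_walk_no_map2 (sg := cprod_sg s1 s2) (w := fun i => (i, Ordinal m_gt0))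
             odd_n (fun i => cprod_adj_row i _)).
- exact: (odd_closed_walk_no_map2 (sg := cprod_sg s1 s2) (w := fun j => (Ordinal n_gt0, j))
             odd_m (cprod_adj_col _)).
Qed.

Lemma torus_no_map3 n m (s1 : 'I_n -> 'I_n -> bool) (s2 : 'I_m -> 'I_m -> bool) :
  1 < n -> 0 < m -> (cycle_sign s1 && ~~ odd n) || (cycle_sign s2 && ~~ odd m) ->
  ~ maps_to_order (cprod_adj (@cyc_adj n) (@cyc_adj m)) (cprod_sg s1 s2) 3.
Proof.
move=> n_gt1 m_gt0 /orP [/andP [sign1 even_n] | /andP [sign2 even_m]].
- apply: (unbalanced_even_walk_no_map3 (sg := cprod_sg s1 s2) (w := fun i => (i, Ordinal m_gt0))
           even_n (fun i => cprod_adj_row i _)).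
  by under eq_bigr do rewrite cprod_sg_row //.
- have n_gt0 : 0 < n by lia.
  apply: (unbalanced_even_walk_no_map3 (sg := cprod_sg s1 s2) (w := fun j => (Ordinal n_gt0, j))
           even_m (cprod_adj_col _)).
  by under eq_bigr do rewrite cprod_sg_col.
Qed.

Lemma torus_no_map4 n m (s1 : 'I_n -> 'I_n -> bool) (s2 : 'I_m -> 'I_m -> bool) :
  1 < n -> (cycle_sign s1 && odd m) != (cycle_sign s2 && odd n) ->
  ~ maps_to_order (cprod_adj (@cyc_adj n) (@cyc_adj m)) (cprod_sg s1 s2) 4.
Proof.
move=> n_gt1 parity [aH [sH [sgH [phi [X hX]]]]].
have [y [c hyc]] := sign4_normal_form sH.
have sH_edge : forall a b, aH a b -> sH a b = y a (+) y b (+) (c a && c b).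
  by apply: edge_sign_from_lt sgH _ hyc => a b; rewrite (addbC (y a)) andbC.
case/eqP: parity.
apply: (clique_torus_parity (t := c \o phi) (z := fun u => (u \in X) (+) y (phi u)) n_gt1).
move=> u v uv; have [adj_uv sign_uv] := hX u v uv.
move: (sH_edge _ _ adj_uv); rewrite sign_uv /=.
move: (c (phi u)) (c (phi v)) (y (phi u)) (y (phi v)) (u \in X) (v \in X) (cprod_sg s1 s2 u v).
by do 7!case.
Qed.

Lemma chis_lower n m (s1 : 'I_n -> 'I_n -> bool) (s2 : 'I_m -> 'I_m -> bool) :
  3 <= n -> 3 <= m ->
  ~ maps_to_order (cprod_adj (@cyc_adj n) (@cyc_adj m)) (cprod_sg s1 s2)
      (chis_table (cycle_type s1) (cycle_type s2)).-1.
Proof.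
move=> n_ge3 m_ge3.
have no1 := @torus_no_map1 _ _ s1 s2 (ltnW (ltnW n_ge3)) (ltnW (ltnW m_ge3)).
have := @torus_no_map2 _ _ s1 s2 (ltnW (ltnW n_ge3)) (ltnW (ltnW m_ge3)).
have := @torus_no_map3 _ _ s1 s2 (ltnW n_ge3) (ltnW (ltnW m_ge3)).
have := @torus_no_map4 _ _ s1 s2 (ltnW n_ge3).
rewrite /cycle_type !odd_neg_edges.
case: (cycle_sign s1); case: (cycle_sign s2); case: (odd n); case: (odd m) => /= no4 no3 no2.
all: by [apply: no1 | apply: no2 | apply: no3 | apply: no4].
Qed.

Theorem theorem6p2 (n m : nat) (s1 : 'I_n -> 'I_n -> bool) (s2 : 'I_m -> 'I_m -> bool) :
  3 <= n -> 3 <= m ->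
  signed_graph (@cyc_adj n) s1 -> signed_graph (@cyc_adj m) s2 ->
  chis_eq (cprod_adj (@cyc_adj n) (@cyc_adj m)) (cprod_sg s1 s2)
          (chis_table (cycle_type s1) (cycle_type s2)).
Proof.
move=> n_ge3 m_ge3 sg1 sg2; split; first exact: chis_upper.
move=> k lt_k maps_k; apply: (chis_lower n_ge3 m_ge3).
by apply: maps_to_order_mono maps_k; rewrite -ltnS (ltn_predK lt_k).
Qed.
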